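(* Let $0\le r\le I_k$ be a self-adjoint $k\times k$ matrix over $\mathbb K$, let $\eta\in G_{n,k'}$, and let $x\in S_{n,k}$ with $x=g_x\hat x_0$ for some $g_x\in U(n)$. Then $\operatorname{Cos}^2(\eta,x)=\delta_0r\delta_0^\ast$ for some $\delta_0\in U(k)$ if and only if $\eta=g_x\rho\, j(r^{1/2})\eta_0$ for some $\rho\in K$.
   Context: $\mathbb K\in\{\mathbb R,\mathbb C,\mathbb H\}$, $x^\ast=\bar x^T$, $\mathbb K^n$ viewed as column vectors with scalars acting on the right. Integers $1\le k\le k'<n$ with $k+k'\le n$. $U(l)=\{g\in M_{l,l}(\mathbb K):g^\ast g=I_l\}$. $S_{n,k}=\{x\in M_{n,k}:x^\ast x=I_k\}$; $G_{n,k}$ is the Grassmannian of $k$-dimensional $\mathbb K$-subspaces of $\mathbb K^n$, and $\{x\}=x\mathbb K^k$. Reference points: $\hat x_0=\begin{bmatrix}0\\ I_k\end{bmatrix}\in S_{n,k}$, $y_0=\begin{bmatrix}I_{k'}\\0\end{bmatrix}\in S_{n,k'}$, $\eta_0=\{y_0\}\in G_{n,k'}$. $K=\{\operatorname{diag}(\alpha,\delta):\alpha\in U(n-k),\delta\in U(k)\}\subset U(n)$. For $\eta\in G_{n,k'}$ let $P_\eta$ be the orthogonal projection of $\mathbb K^n$ onto $\eta$ and, for $x\in S_{n,k}$, $\operatorname{Cos}^2(\eta,x)=x^\ast P_\eta x$ (a $k\times k$ positive semidefinite matrix). For $a\in M_{k,k}(\mathbb K)$ with $a^\ast a\le I_k$,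 $j(a)\in U(n)$ is the block matrix with respect to $\mathbb K^n=\mathbb K^{k'-k}\oplus\mathbb K^k\oplus\mathbb K^{n-k'-k}\oplus\mathbb K^k$: $$j(a)=\begin{bmatrix}I_{k'-k}&0&0&0\\0&(I_k-a^\ast a)^{1/2}&0&a^\ast\\0&0&I_{n-k'-k}&0\\0&-a&0&(I_k-aa^\ast)^{1/2}\end{bmatrix},$$ and $j(a)\eta_0$ denotes the image subspace. *)

From HB Require Import structures.
From mathcomp Require Import all_boot all_order all_algebra.
From mathcomp Require Import ring.
From mathcomp Require Import reals.
From Stdlib Require Import ClassicalEpsilon.
Set Implicit Arguments. Unset Strict Implicit. Unset Printing Implicit Defensive.
Import Order.TTheory GRing.Theory Num.Theory.
Local Open Scope ring_scope.

Record quat (R : Type) := Quat { qre : R; qi : R; qj : R; qk : R }.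
Definition quat_to4 (R : Type) (q : quat R) := (qre q, qi q, qj q, qk q).
Definition quat_of4 (R : Type) (t : R * R * R * R) :=
  let: (a, b, c, d) := t in Quat a b c d.
Lemma quat_to4K (R : Type) : cancel (@quat_to4 R) (@quat_of4 R).
Proof. by case. Qed.
HB.instance Definition _ (R : eqType) := Equality.copy (quat R) (can_type (@quat_to4K R)).
HB.instance Definition _ (R : choiceType) := Choice.copy (quat R) (can_type (@quat_to4K R)).

Definition qzero (R : comNzRingType) : quat R := Quat 0 0 0 0.
Definition qone (R : comNzRingType) : quat R := Quat 1 0 0 0.
Definition qadd (R : comNzRingType) (p q : quat R) : quat R :=
  Quat (qre p + qre q) (qi p + qi q) (qj p + qj q) (qk p + qk q).
Definition qopp (R : comNzRingType) (p : quat R) : quat R :=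
  Quat (- qre p) (- qi p) (- qj p) (- qk p).
Definition qmul (R : comNzRingType) (p q : quat R) : quat R :=
  Quat (qre p * qre q - qi p * qi q - qj p * qj q - qk p * qk q)
       (qre p * qi q + qi p * qre q + qj p * qk q - qk p * qj q)
       (qre p * qj q - qi p * qk q + qj p * qre q + qk p * qi q)
       (qre p * qk q + qi p * qj q - qj p * qi q + qk p * qre q).

Lemma qaddA (R : comNzRingType) : associative (@qadd R).
Proof. by move=> [? ? ? ?] [? ? ? ?] [? ? ? ?]; congr Quat; rewrite /= addrA. Qed.
Lemma qaddC (R : comNzRingType) : commutative (@qadd R).
Proof. by move=> [? ? ? ?] [? ? ? ?]; congr Quat; rewrite /= addrC. Qed.
Lemma qadd0 (R : comNzRingType) : left_id (@qzero R) (@qadd R).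
Proof. by move=> [? ? ? ?]; congr Quat; rewrite /= add0r. Qed.
Lemma qaddN (R : comNzRingType) : left_inverse (@qzero R) (@qopp R) (@qadd R).
Proof. by move=> [? ? ? ?]; congr Quat; rewrite /= addNr. Qed.
HB.instance Definition _ (R : comNzRingType) :=
  GRing.isZmodule.Build (quat R) (@qaddA R) (@qaddC R) (@qadd0 R) (@qaddN R).

Lemma qmulA (R : comNzRingType) : associative (@qmul R).
Proof. by move=> [? ? ? ?] [? ? ? ?] [? ? ? ?]; congr Quat => /=; ring. Qed.
Lemma qmul1 (R : comNzRingType) : left_id (@qone R) (@qmul R).
Proof. by move=> [? ? ? ?]; congr Quat => /=; ring. Qed.
Lemma qmulr1 (R : comNzRingType) : right_id (@qone R) (@qmul R).
Proof. by move=> [? ? ? ?]; congr Quat => /=; ring. Qed.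
Lemma qmulDl (R : comNzRingType) : left_distributive (@qmul R) +%R.
Proof. by move=> [? ? ? ?] [? ? ? ?] [? ? ? ?]; congr Quat => /=; ring. Qed.
Lemma qmulDr (R : comNzRingType) : right_distributive (@qmul R) +%R.
Proof. by move=> [? ? ? ?] [? ? ? ?] [? ? ? ?]; congr Quat => /=; ring. Qed.
Lemma qone_neq0 (R : comNzRingType) : @qone R != 0.
Proof. by apply/eqP => -[] /eqP; rewrite oner_eq0. Qed.
HB.instance Definition _ (R : comNzRingType) :=
  GRing.Zmodule_isNzRing.Build (quat R) (@qmulA R) (@qmul1 R) (@qmulr1 R)
    (@qmulDl R) (@qmulDr R) (@qone_neq0 R).

(* The three real division algebras R, C, H are realised inside the         *)
(* quaternions quat R (R a realType):                                       *)
(*   R = { q | qi q = qj q = qk q = 0 },  C = { q | qj q = qk q = 0 },  H.   *)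
(* K^n = column vectors with entries in K, scalars acting on the right      *)
(* (v *m c with c a K-column), as in the paper.                             *)

Inductive Kfield := Kreal | Kcomplex | Kquat.

Definition inK (R : realType) (F : Kfield) (q : quat R) : bool :=
  match F with
  | Kreal => [&& qi q == 0, qj q == 0 & qk q == 0]
  | Kcomplex => (qj q == 0) && (qk q == 0)
  | Kquat => true
  end.

Definition Kmx (R : realType) (F : Kfield) (p q : nat) (M : 'M[quat R]_(p, q)) :=
  forall i j, inK F (M i j).

Definition qconj (R : realType) (q : quat R) : quat R :=
  Quat (qre q) (- qi q) (- qj q) (- qk q).
Definition adj (R : realType) (p q : nat) (M : 'M[quat R]_(p, q)) : 'M[quat R]_(q, p) :=
  (map_mx (@qconj R) M)^T.

Definition unitaryK (R : realType) (F : Kfield) (l : nat) (g : 'M[quat R]_l) :=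
  Kmx F g /\ adj g *m g = 1%:M.

Definition StiefelK (R : realType) (F : Kfield) (n k : nat) (x : 'M[quat R]_(n, k)) :=
  Kmx F x /\ adj x *m x = 1%:M.

Definition Kspan (R : realType) (F : Kfield) (n m : nat) (b : 'M[quat R]_(n, m))
    : 'cV[quat R]_n -> Prop :=
  fun v => exists c : 'cV[quat R]_m, Kmx F c /\ v = b *m c.

(* eta is an element of G_{n,m}: a K-subspace of K^n of K-dimension m, i.e. *)
(* it has a basis of m vectors (the K-linearly independent columns of b).   *)
Definition GrassK (R : realType) (F : Kfield) (n m : nat) (eta : 'cV[quat R]_n -> Prop) :=
  exists b : 'M[quat R]_(n, m),
    [/\ Kmx F b,
        (forall c : 'cV[quat R]_m, Kmx F c -> b *m c = 0 -> c = 0) &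
        forall v, eta v <-> Kspan F b v].

Definition imgsp (R : realType) (n : nat) (g : 'M[quat R]_n) (V : 'cV[quat R]_n -> Prop)
    : 'cV[quat R]_n -> Prop :=
  fun v => exists w, V w /\ v = g *m w.

Definition is_orth_proj (R : realType) (F : Kfield) (n : nat)
    (eta : 'cV[quat R]_n -> Prop) (P : 'M[quat R]_n) :=
  forall v : 'cV[quat R]_n, Kmx F v ->
    eta (P *m v) /\ (forall w, eta w -> adj w *m (v - P *m v) = 0).

Definition Pproj (R : realType) (F : Kfield) (n : nat) (eta : 'cV[quat R]_n -> Prop)
    : 'M[quat R]_n :=
  epsilon (inhabits 0) (is_orth_proj F eta).

Definition Cos2 (R : realType) (F : Kfield) (n k : nat) (eta : 'cV[quat R]_n -> Prop)
    (x : 'M[quat R]_(n, k)) : 'M[quat R]_k :=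
  adj x *m Pproj F eta *m x.

Definition psdK (R : realType) (F : Kfield) (k : nat) (r : 'M[quat R]_k) :=
  [/\ Kmx F r, adj r = r &
      forall c : 'cV[quat R]_k, Kmx F c -> 0 <= qre ((adj c *m r *m c) ord0 ord0)].

Definition psd_sqrt (R : realType) (F : Kfield) (k : nat) (r : 'M[quat R]_k)
    : 'M[quat R]_k :=
  epsilon (inhabits 0) (fun s => psdK F s /\ s *m s = r).

Definition mxget (R : realType) (p q : nat) (M : 'M[quat R]_(p, q)) (i j : nat) : quat R :=
  match (insub i : option 'I_p), (insub j : option 'I_q) with
  | Some i', Some j' => M i' j'
  | _, _ => 0
  end.

Definition xhat0 (R : realType) (n k : nat) : 'M[quat R]_(n, k) :=
  \matrix_(i < n, j < k) mxget (col_mx (0 : 'M[quat R]_(n - k, k)) 1%:M) i j.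

Definition y0 (R : realType) (n k' : nat) : 'M[quat R]_(n, k') :=
  \matrix_(i < n, j < k') mxget (col_mx (1%:M : 'M[quat R]_k') (0 : 'M_(n - k', k'))) i j.
Definition eta0 (R : realType) (F : Kfield) (n k' : nat) : 'cV[quat R]_n -> Prop :=
  Kspan F (y0 R n k').

Definition inKgrp (R : realType) (F : Kfield) (n k : nat) (rho : 'M[quat R]_n) :=
  exists (alpha : 'M[quat R]_(n - k)) (delta : 'M[quat R]_k),
    [/\ unitaryK F alpha, unitaryK F delta &
        rho = \matrix_(i < n, j < n) mxget (block_mx alpha 0 0 delta) i j].

(* j(a), block matrix w.r.t. K^n = K^{k'-k} (+) K^k (+) K^{n-k'-k} (+) K^k *)
Definition jmat (R : realType) (F : Kfield) (n k k' : nat) (a : 'M[quat R]_k)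
    : 'M[quat R]_n :=
  let S1 := psd_sqrt F (1%:M - adj a *m a) in
  let S2 := psd_sqrt F (1%:M - a *m adj a) in
  \matrix_(i < n, j < n) mxget
    (block_mx
       (block_mx (1%:M : 'M[quat R]_(k' - k)) 0 0 S1)
       (block_mx (0 : 'M[quat R]_(k' - k, n - k' - k)) 0 0 (adj a))
       (block_mx (0 : 'M[quat R]_(n - k' - k, k' - k)) 0 0 (- a))
       (block_mx (1%:M : 'M[quat R]_(n - k' - k)) 0 0 S2)) i j.

Arguments GrassK {R} F n m eta.
Arguments eta0 {R} F n k' _.
Arguments inKgrp {R} F n k rho.
Arguments jmat {R} F n k k' a.

(* Let [Y] be an orthonormal basis of [eta], so that [Cos^2(eta, x) = (x^* Y)(x^* Y)^*]
   and, after moving by [g_x^*], [x^* Y] is the lower [k x k'] block of an orthonormal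
   frame.  The columns of [j(r^{1/2}) y_0] form an orthonormal frame whose lower block
   [[0, -r^{1/2}]] has Gram matrix [r].  Hence [Cos^2 = delta0 r delta0^*] says that the
   lower blocks of the two frames have the same Gram matrix up to [delta0], and Witt's
   extension theorem (matrices with equal Gram matrices differ by a unitary), applied
   to the lower and then to the upper blocks, produces [rho = diag(alpha, delta0)].
   The converse is a direct computation.  Over [K] the square roots [r^{1/2}] and
   [(1 - r)^{1/2}] exist by the spectral theorem; an eigenvector of a hermitian
   quaternionic matrix comes from one of its complex representation. *)

From HB Require Import structures.
From mathcomp Require Import all_boot all_order all_algebra.
From mathcomp Require Import reals complex spectral.
From mathcomp Require Import ring lra zify.
From Stdlib Require Import ClassicalEpsilon.
Set Implicit Arguments. Unset Strict Implicit. Unset Printing Implicit Defensive.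
Import Order.TTheory GRing.Theory Num.Theory.
Local Open Scope ring_scope.

Section Quaternion.
Variable R : realType.
Local Notation H := (quat R).

Lemma quat_ext (p q : H) :
  qre p = qre q -> qi p = qi q -> qj p = qj q -> qk p = qk q -> p = q.
Proof. by case: p; case: q => /= ? ? ? ? ? ? ? ? -> -> -> ->. Qed.

Definition qreal (x : R) : H := Quat x 0 0 0.

Lemma qrealD x y : qreal (x + y) = qreal x + qreal y.
Proof. by apply: quat_ext => /=; ring. Qed.
Lemma qrealM x y : qreal (x * y) = qreal x * qreal y.
Proof. by apply: quat_ext => /=; ring. Qed.
Lemma qreal0 : qreal 0 = 0. Proof. by []. Qed.
Lemma qreal1 : qreal 1 = 1. Proof. by []. Qed.
Lemma qrealC x (q : H) : qreal x * q = q * qreal x.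
Proof. by apply: quat_ext => /=; ring. Qed.
Lemma qreal_sum I (r : seq I) (P : pred I) (f : I -> R) :
  qreal (\sum_(i <- r | P i) f i) = \sum_(i <- r | P i) qreal (f i).
Proof. exact: (big_morph qreal qrealD qreal0). Qed.
Lemma qre_qrealM x (q : H) : qre (qreal x * q) = x * qre q.
Proof. by rewrite /=; ring. Qed.

Lemma qconjK : involutive (@qconj R).
Proof. by move=> q; apply: quat_ext => /=; ring. Qed.
Lemma qconjD (p q : H) : qconj (p + q) = qconj p + qconj q.
Proof. by apply: quat_ext => /=; ring. Qed.
Lemma qconjN (p : H) : qconj (- p) = - qconj p.
Proof. by apply: quat_ext => /=; ring. Qed.
Lemma qconj0 : qconj (0 : H) = 0.
Proof. by apply: quat_ext => /=; ring. Qed.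
Lemma qconj1 : qconj (1 : H) = 1.
Proof. by apply: quat_ext => /=; ring. Qed.
Lemma qconjM (p q : H) : qconj (p * q) = qconj q * qconj p.
Proof. by apply: quat_ext => /=; ring. Qed.
Lemma qconj_real x : qconj (qreal x) = qreal x.
Proof. by apply: quat_ext => /=; ring. Qed.
Lemma qconj_sum I (r : seq I) (P : pred I) (f : I -> H) :
  qconj (\sum_(i <- r | P i) f i) = \sum_(i <- r | P i) qconj (f i).
Proof. exact: (big_morph (@qconj R) qconjD qconj0). Qed.

Definition qnorm2 (q : H) : R := qre q ^+ 2 + qi q ^+ 2 + qj q ^+ 2 + qk q ^+ 2.

Lemma qnorm2_ge0 q : 0 <= qnorm2 q.
Proof. by rewrite /qnorm2 !addr_ge0 ?sqr_ge0. Qed.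
Lemma qnorm2_eq0 q : qnorm2 q = 0 -> q = 0.
Proof.
rewrite /qnorm2 => h.
have := sqr_ge0 (qre q); have := sqr_ge0 (qi q).
have := sqr_ge0 (qj q); have := sqr_ge0 (qk q).
by move=> *; apply: quat_ext => /=; apply/eqP; rewrite -sqrf_eq0; apply/eqP; lra.
Qed.
Lemma mul_qconj_l (q : H) : qconj q * q = qreal (qnorm2 q).
Proof. by apply: quat_ext => /=; rewrite /qnorm2; ring. Qed.
Lemma mul_qconj_r (q : H) : q * qconj q = qreal (qnorm2 q).
Proof. by apply: quat_ext => /=; rewrite /qnorm2; ring. Qed.

Variable F : Kfield.

Lemma inK0 : inK F (0 : H). Proof. by case: F => //=; rewrite eqxx. Qed.
Lemma inK1 : inK F (1 : H). Proof. by case: F => //=; rewrite eqxx. Qed.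
Lemma inK_real x : inK F (qreal x). Proof. by case: F => //=; rewrite eqxx. Qed.
Lemma inKD (p q : H) : inK F p -> inK F q -> inK F (p + q).
Proof.
case: F => //=.
  by move=> /and3P[/eqP-> /eqP-> /eqP->] /and3P[/eqP-> /eqP-> /eqP->]; rewrite !addr0 eqxx.
by move=> /andP[/eqP-> /eqP->] /andP[/eqP-> /eqP->]; rewrite !addr0 eqxx.
Qed.
Lemma inKN (p : H) : inK F p -> inK F (- p).
Proof.
case: F => //=; first by move=> /and3P[/eqP-> /eqP-> /eqP->]; rewrite !oppr0 eqxx.
by move=> /andP[/eqP-> /eqP->]; rewrite !oppr0 eqxx.
Qed.
Lemma inKM (p q : H) : inK F p -> inK F q -> inK F (p * q).
Proof.
case: F => //=; case: p => a b c d; case: q => a' b' c' d' /=.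
  move=> /and3P[/eqP-> /eqP-> /eqP->] /and3P[/eqP-> /eqP-> /eqP->].
  by apply/and3P; split; apply/eqP; ring.
by move=> /andP[/eqP-> /eqP->] /andP[/eqP-> /eqP->]; apply/andP; split; apply/eqP; ring.
Qed.
Lemma inK_conj (p : H) : inK F p -> inK F (qconj p).
Proof.
case: F => //=; first by move=> /and3P[/eqP-> /eqP-> /eqP->]; rewrite !oppr0 eqxx.
by move=> /andP[/eqP-> /eqP->]; rewrite !oppr0 eqxx.
Qed.
Lemma inK_sum I (r : seq I) (P : pred I) (f : I -> H) :
  (forall i, P i -> inK F (f i)) -> inK F (\sum_(i <- r | P i) f i).
Proof. by move=> h; apply: (big_ind (inK F)) => //; [exact: inK0 | exact: inKD]. Qed.

End Quaternion.

Section QuaternionMatrix.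
Variable R : realType.
Local Notation H := (quat R).

Lemma adjE m n (A : 'M[H]_(m, n)) i j : adj A i j = qconj (A j i).
Proof. by rewrite /adj !mxE. Qed.
Lemma adjK m n (A : 'M[H]_(m, n)) : adj (adj A) = A.
Proof. by apply/matrixP => i j; rewrite !adjE qconjK. Qed.
Lemma adjM m n p (A : 'M[H]_(m, n)) (B : 'M[H]_(n, p)) :
  adj (A *m B) = adj B *m adj A.
Proof.
apply/matrixP => i j; rewrite adjE !mxE qconj_sum; apply: eq_bigr => l _.
by rewrite qconjM !adjE.
Qed.
Lemma adjD m n (A B : 'M[H]_(m, n)) : adj (A + B) = adj A + adj B.
Proof. by apply/matrixP => i j; rewrite /adj !mxE qconjD. Qed.
Lemma adjN m n (A : 'M[H]_(m, n)) : adj (- A) = - adj A.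
Proof. by apply/matrixP => i j; rewrite /adj !mxE qconjN. Qed.
Lemma adjB m n (A B : 'M[H]_(m, n)) : adj (A - B) = adj A - adj B.
Proof. by rewrite adjD adjN. Qed.
Lemma adj0 m n : adj (0 : 'M[H]_(m, n)) = 0.
Proof. by apply/matrixP => i j; rewrite /adj !mxE qconj0. Qed.
Lemma adj_scalar n (a : H) : adj (a%:M : 'M_n) = (qconj a)%:M.
Proof.
apply/matrixP => i j; rewrite /adj !mxE.
by case: (i =P j) => [->|/eqP ne]; rewrite ?eqxx ?mulr1n // eq_sym (negPf ne) !mulr0n qconj0.
Qed.
Lemma adj1 n : adj (1%:M : 'M[H]_n) = 1%:M.
Proof. by rewrite adj_scalar qconj1. Qed.
Lemma adj_col_mx m1 m2 n (A : 'M[H]_(m1, n)) (B : 'M[H]_(m2, n)) :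
  adj (col_mx A B) = row_mx (adj A) (adj B).
Proof. by rewrite /adj map_col_mx tr_col_mx. Qed.
Lemma adj_row_mx m n1 n2 (A : 'M[H]_(m, n1)) (B : 'M[H]_(m, n2)) :
  adj (row_mx A B) = col_mx (adj A) (adj B).
Proof. by rewrite /adj map_row_mx tr_row_mx. Qed.
Lemma adj_block_mx m1 m2 n1 n2 (A : 'M[H]_(m1, n1)) (B : 'M[H]_(m1, n2))
  (C : 'M[H]_(m2, n1)) (D : 'M[H]_(m2, n2)) :
  adj (block_mx A B C D) = block_mx (adj A) (adj C) (adj B) (adj D).
Proof. by rewrite /adj map_block_mx tr_block_mx. Qed.
Lemma adj_scale_real m n x (A : 'M[H]_(m, n)) : adj (qreal x *: A) = qreal x *: adj A.
Proof. by apply/matrixP => i j; rewrite /adj !mxE qconjM qconj_real qrealC. Qed.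

Lemma scalemxAr_real m n p x (A : 'M[H]_(m, n)) (B : 'M[H]_(n, p)) :
  A *m (qreal x *: B) = qreal x *: (A *m B).
Proof.
apply/matrixP => i j; rewrite !mxE mulr_sumr; apply: eq_bigr => l _.
by rewrite !mxE mulrA -qrealC mulrA.
Qed.
Lemma mul_mx_scalar_real m n x (A : 'M[H]_(m, n)) : A *m (qreal x)%:M = qreal x *: A.
Proof. by rewrite -scalemx1 scalemxAr_real mulmx1. Qed.

Variable F : Kfield.

Lemma Kmx0 m n : Kmx F (0 : 'M[H]_(m, n)).
Proof. by move=> i j; rewrite mxE; exact: inK0. Qed.
Lemma Kmx_scalar n (a : H) : inK F a -> Kmx F (a%:M : 'M_n).
Proof.
by move=> ha i j; rewrite !mxE; case: (i == j); rewrite ?mulr1n ?mulr0n //; exact: inK0.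
Qed.
Lemma Kmx1 n : Kmx F (1%:M : 'M[H]_n).
Proof. exact/Kmx_scalar/inK1. Qed.
Lemma KmxD m n (A B : 'M[H]_(m, n)) : Kmx F A -> Kmx F B -> Kmx F (A + B).
Proof. by move=> hA hB i j; rewrite mxE; apply: inKD. Qed.
Lemma KmxN m n (A : 'M[H]_(m, n)) : Kmx F A -> Kmx F (- A).
Proof. by move=> hA i j; rewrite mxE; apply: inKN. Qed.
Lemma KmxB m n (A B : 'M[H]_(m, n)) : Kmx F A -> Kmx F B -> Kmx F (A - B).
Proof. by move=> hA hB; apply: KmxD => //; apply: KmxN. Qed.
Lemma KmxM m n p (A : 'M[H]_(m, n)) (B : 'M[H]_(n, p)) :
  Kmx F A -> Kmx F B -> Kmx F (A *m B).
Proof. by move=> hA hB i j; rewrite mxE; apply: inK_sum => l _; apply: inKM. Qed.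
Lemma Kmx_adj m n (A : 'M[H]_(m, n)) : Kmx F A -> Kmx F (adj A).
Proof. by move=> hA i j; rewrite adjE; apply: inK_conj. Qed.
Lemma Kmx_scale_real m n x (A : 'M[H]_(m, n)) : Kmx F A -> Kmx F (qreal x *: A).
Proof. by move=> hA i j; rewrite mxE; apply: inKM => //; apply: inK_real. Qed.
Lemma Kmx_col_mx m1 m2 n (A : 'M[H]_(m1, n)) (B : 'M[H]_(m2, n)) :
  Kmx F A -> Kmx F B -> Kmx F (col_mx A B).
Proof.
move=> hA hB i j; rewrite -(splitK i).
by case: (split i) => i' /=; rewrite ?col_mxEu ?col_mxEd.
Qed.
Lemma Kmx_row_mx m n1 n2 (A : 'M[H]_(m, n1)) (B : 'M[H]_(m, n2)) :
  Kmx F A -> Kmx F B -> Kmx F (row_mx A B).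
Proof.
move=> hA hB i j; rewrite -(splitK j).
by case: (split j) => j' /=; rewrite ?row_mxEl ?row_mxEr.
Qed.
Lemma Kmx_block_mx m1 m2 n1 n2 (A : 'M[H]_(m1, n1)) (B : 'M[H]_(m1, n2))
  (C : 'M[H]_(m2, n1)) (D : 'M[H]_(m2, n2)) :
  Kmx F A -> Kmx F B -> Kmx F C -> Kmx F D -> Kmx F (block_mx A B C D).
Proof. by move=> *; apply: Kmx_col_mx; apply: Kmx_row_mx. Qed.
Lemma Kmx_usub m1 m2 n (A : 'M[H]_(m1 + m2, n)) : Kmx F A -> Kmx F (usubmx A).
Proof. by move=> hA i j; rewrite mxE. Qed.
Lemma Kmx_dsub m1 m2 n (A : 'M[H]_(m1 + m2, n)) : Kmx F A -> Kmx F (dsubmx A).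
Proof. by move=> hA i j; rewrite mxE. Qed.
Lemma Kmx_lsub m n1 n2 (A : 'M[H]_(m, n1 + n2)) : Kmx F A -> Kmx F (lsubmx A).
Proof. by move=> hA i j; rewrite mxE. Qed.
Lemma Kmx_rsub m n1 n2 (A : 'M[H]_(m, n1 + n2)) : Kmx F A -> Kmx F (rsubmx A).
Proof. by move=> hA i j; rewrite mxE. Qed.
Lemma Kmx_delta m n (i0 : 'I_m) (j0 : 'I_n) : Kmx F (delta_mx i0 j0 : 'M[H]_(m, n)).
Proof. by move=> i j; rewrite mxE; case: (_ && _); [exact: inK1 | exact: inK0]. Qed.

Definition vnorm2 n (c : 'cV[H]_n) : R := \sum_i qnorm2 (c i 0).
Definition vnorm n (c : 'cV[H]_n) : R := Num.sqrt (vnorm2 c).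

Lemma gram_vec n (c : 'cV[H]_n) : adj c *m c = (qreal (vnorm2 c))%:M.
Proof.
apply/matrixP => i j; rewrite !ord1 !mxE /= mulr1n qreal_sum.
by apply: eq_bigr => l _; rewrite adjE mul_qconj_l.
Qed.
Lemma vnorm2_ge0 n (c : 'cV[H]_n) : 0 <= vnorm2 c.
Proof. by apply: sumr_ge0 => i _; apply: qnorm2_ge0. Qed.
Lemma vnorm2_eq0 n (c : 'cV[H]_n) : vnorm2 c = 0 -> c = 0.
Proof.
move=> /eqP; rewrite psumr_eq0 => [/allP h|i _]; last exact: qnorm2_ge0.
apply/matrixP => i j; rewrite ord1 mxE; apply: qnorm2_eq0; apply/eqP.
by apply: h; rewrite mem_index_enum.
Qed.
Lemma vnorm_sqr n (c : 'cV[H]_n) : vnorm c ^+ 2 = vnorm2 c.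
Proof. by rewrite sqr_sqrtr // vnorm2_ge0. Qed.
Lemma vnorm_eq0 n (c : 'cV[H]_n) : (vnorm c == 0) = (c == 0).
Proof.
apply/eqP/eqP => [h|->]; last first.
  by rewrite /vnorm /vnorm2 big1 ?sqrtr0 // => i _; rewrite mxE /qnorm2 /=; ring.
by apply: vnorm2_eq0; rewrite -vnorm_sqr h expr0n.
Qed.
Lemma gram_vec_eq0 n (c : 'cV[H]_n) : adj c *m c = 0 -> c = 0.
Proof.
rewrite gram_vec => /matrixP /(_ 0 0); rewrite !mxE /= mulr1n.
by move=> /(congr1 (@qre R)); apply: vnorm2_eq0.
Qed.
Lemma vnorm2_gram n (a b : 'cV[H]_n) : adj a *m a = adj b *m b -> vnorm2 a = vnorm2 b.
Proof.
by rewrite !gram_vec => /matrixP /(_ 0 0); rewrite !mxE /= !mulr1n => /(congr1 (@qre R)).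
Qed.

End QuaternionMatrix.

Section Unitary.
Variable R : realType.
Local Notation H := (quat R).
Variable F : Kfield.

Definition Kunitary n (U : 'M[H]_n) :=
  [/\ Kmx F U, adj U *m U = 1%:M & U *m adj U = 1%:M].

Lemma Kunitary1 n : Kunitary (1%:M : 'M[H]_n).
Proof. by split; rewrite ?adj1 ?mulmx1 //; apply: Kmx1. Qed.
Lemma KunitaryM n (U V : 'M[H]_n) : Kunitary U -> Kunitary V -> Kunitary (U *m V).
Proof.
move=> [KU aU bU] [KV aV bV]; split; first exact: KmxM.
  by rewrite adjM -mulmxA (mulmxA (adj U)) aU mul1mx.
by rewrite adjM -mulmxA (mulmxA V) bV mul1mx.
Qed.
Lemma Kunitary_adj n (U : 'M[H]_n) : Kunitary U -> Kunitary (adj U).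
Proof. by move=> [KU aU bU]; split; rewrite ?adjK //; apply: Kmx_adj. Qed.
Lemma Kunitary_block m n (U : 'M[H]_m) (V : 'M[H]_n) :
  Kunitary U -> Kunitary V -> Kunitary (block_mx U 0 0 V).
Proof.
move=> [KU aU bU] [KV aV bV]; split; first by apply: Kmx_block_mx => //; apply: Kmx0.
  by rewrite adj_block_mx !adj0 mulmx_block !(mulmx0, mul0mx, addr0, add0r) aU aV
             -scalar_mx_block.
by rewrite adj_block_mx !adj0 mulmx_block !(mulmx0, mul0mx, addr0, add0r) bU bV
           -scalar_mx_block.
Qed.

Lemma gram_isometry n p1 p2 (U : 'M[H]_n) (X : 'M[H]_(n, p1)) (Y : 'M[H]_(n, p2)) :
  adj U *m U = 1%:M -> adj (U *m X) *m (U *m Y) = adj X *m Y.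
Proof. by move=> uU; rewrite adjM -mulmxA (mulmxA (adj U)) uU mul1mx. Qed.

Lemma qphase (c : H) : inK F c -> exists u : H,
  [/\ inK F u, qconj u * u = 1, u * qconj u = 1 &
      qconj c * u = qreal (Num.sqrt (qnorm2 c))].
Proof.
move=> Kc; set t := Num.sqrt (qnorm2 c).
have [t0|t0] := eqVneq t 0.
  exists 1; split; rewrite ?qconj1 ?mulr1 //; first exact: inK1.
  suff -> : c = 0 by rewrite qconj0 t0.
  by apply: qnorm2_eq0; apply/eqP; rewrite eq_le qnorm2_ge0 andbT -sqrtr_eq0 -/t t0.
have t2 : qnorm2 c = t ^+ 2 by rewrite sqr_sqrtr // qnorm2_ge0.
exists (c * qreal t^-1); split.
- by apply: inKM => //; apply: inK_real.
- rewrite qconjM qconj_real -mulrA (mulrA (qconj c)) mul_qconj_l qrealC -mulrA -qrealM.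
  by rewrite -qrealM t2 -qreal1; congr qreal; field.
- rewrite qconjM qconj_real -mulrA (mulrA (qreal _)) -qrealM qrealC mulrA mul_qconj_r.
  by rewrite -qrealM t2 -qreal1; congr qreal; field.
- by rewrite mulrA mul_qconj_l -qrealM t2; congr qreal; field.
Qed.

(* A Householder reflection [1 - 2 w w^* / |w|^2] with [w = c - e]. *)
Lemma householder m (c e : 'cV[H]_m) : Kmx F c -> Kmx F e ->
  adj c *m c = adj e *m e -> adj e *m c = adj c *m e ->
  exists U, Kunitary U /\ U *m c = e.
Proof.
move=> Kc Ke cc ec; set w := c - e; set nu := vnorm2 w.
have [/vnorm2_eq0/eqP|nu0] := eqVneq nu 0.
  by rewrite subr_eq0 => /eqP <-; exists 1%:M; split; [exact: Kunitary1 | rewrite mul1mx].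
have wc : adj w *m c = (qreal (nu / 2))%:M.
  have ww : adj w *m w = adj w *m c + adj w *m c.
    by rewrite /w adjB !mulmxBl !mulmxBr -cc ec opprB.
  have -> : adj w *m c = qreal 2^-1 *: (qreal 2 *: (adj w *m c)).
    by rewrite scalerA -qrealM mulVf ?pnatr_eq0 // scale1r.
  have -> : qreal 2 *: (adj w *m c) = adj w *m w.
    rewrite ww -{2 3}[adj w *m c]scale1r -scalerDl; congr (_ *: _).
    by apply: quat_ext => /=; ring.
  by rewrite gram_vec scale_scalar_mx -qrealM mulrC.
pose P := w *m adj w.
have PP : P *m P = qreal nu *: P.
  by rewrite /P mulmxA -(mulmxA w) gram_vec mul_mx_scalar_real -scalemxAl.
pose U := 1%:M - qreal (2 / nu) *: P.
have aU : adj U = U by rewrite /U adjB adj1 adj_scale_real adjM adjK.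
have UU : U *m U = 1%:M.
  rewrite /U mulmxBl mul1mx mulmxBr mulmx1 -scalemxAl scalemxAr_real PP !scalerA -!qrealM.
  have -> : 2 / nu * (2 / nu * nu) = 2 / nu + 2 / nu by field.
  by rewrite qrealD scalerDl opprB addrK subrK.
exists U; split.
  split; rewrite ?aU //; apply: KmxB; first exact: Kmx1.
  by apply: Kmx_scale_real; apply: KmxM; [apply: KmxB | apply/Kmx_adj/KmxB].
rewrite /U mulmxBl mul1mx -scalemxAl -mulmxA wc mul_mx_scalar_real scalerA -qrealM.
have -> : 2 / nu * (nu / 2) = 1 by field.
by rewrite scale1r /w opprB addrC subrK.
Qed.


Lemma adj_axis_mul m p x (X : 'M[H]_(1 + m, p)) :
  adj (col_mx (qreal x)%:M 0 : 'cV_(1 + m)) *m X = qreal x *: usubmx X.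
Proof.
rewrite -{1}[X]vsubmxK adj_col_mx mul_row_col adj0 mul0mx addr0.
by rewrite adj_scalar qconj_real mul_scalar_mx.
Qed.

(* After the phase [u] of the top entry, [c] and [u |c| e_1] have a real *)
(* inner product, so a Householder reflection maps one onto the other.    *)
Lemma Kunitary_align m (c : 'cV[H]_(1 + m)) : Kmx F c ->
  exists U, Kunitary U /\ U *m c = col_mx (qreal (vnorm c))%:M 0.
Proof.
move=> Kc; set s := vnorm c; set c1 := usubmx c 0 0.
have [u [Ku uu1 uu2 cu]] := qphase (Kmx_usub Kc 0 0 : inK F c1).
pose e : 'cV[H]_(1 + m) := col_mx (u * qreal s)%:M 0.
have ce : adj c *m e = (qreal (Num.sqrt (qnorm2 c1) * s))%:M.
  rewrite -{1}[c]vsubmxK adj_col_mx mul_row_col mulmx0 addr0 {1}[usubmx c]mx11_scalar.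
  by rewrite adj_scalar -scalar_mxM mulrA cu qrealM.
have [U [uU Uc]] : exists U, Kunitary U /\ U *m c = e.
  apply: householder => //.
  - by apply: Kmx_col_mx; [apply/Kmx_scalar/inKM/inK_real | apply: Kmx0].
  - rewrite gram_vec -vnorm_sqr -/s adj_col_mx mul_row_col mulmx0 addr0 adj_scalar.
    by rewrite -scalar_mxM qconjM qconj_real mulrA -(mulrA _ _ u) uu1 mulr1 -qrealM.
  - by rewrite -[c in LHS]adjK -adjM ce adj_scalar qconj_real.
pose D : 'M[H]_(1 + m) := block_mx (qconj u)%:M 0 0 1%:M.
exists (D *m U); split.
  apply: KunitaryM => //; apply: Kunitary_block; last exact: Kunitary1.
  split; rewrite ?adj_scalar ?qconjK -?scalar_mxM ?uu1 ?uu2 //.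
  exact/Kmx_scalar/inK_conj.
rewrite -mulmxA Uc mul_block_col !(mulmx0, mul0mx, addr0) -scalar_mxM.
by rewrite mulrA uu1 mul1r.
Qed.

(* Witt's extension theorem, by induction on the number of columns. *)
Lemma gram_eq_Kunitary m p (A B : 'M[H]_(m, p)) : Kmx F A -> Kmx F B ->
  adj A *m A = adj B *m B -> exists U, Kunitary U /\ A = U *m B.
Proof.
elim: p m A B => [|p IH] m A B KA KB.
  by exists 1%:M; split; [exact: Kunitary1 | rewrite mul1mx; apply/matrixP => i []].
case: m A B KA KB => [|m] A B KA KB.
  by exists 1%:M; split; [exact: Kunitary1 | rewrite mul1mx; apply/matrixP => [[]]].
move: A B KA KB; rewrite -[p.+1]/(1 + p)%N -[m.+1]/(1 + m)%N => A B.
rewrite -[A]hsubmxK -[B]hsubmxK.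
move: (lsubmx A) (rsubmx A) (lsubmx B) (rsubmx B) => a A2 b B2 {A B} KA KB.
have [Ka KA2] : Kmx F a /\ Kmx F A2.
  by split; [have := Kmx_lsub KA; rewrite row_mxKl | have := Kmx_rsub KA; rewrite row_mxKr].
have [Kb KB2] : Kmx F b /\ Kmx F B2.
  by split; [have := Kmx_lsub KB; rewrite row_mxKl | have := Kmx_rsub KB; rewrite row_mxKr].
rewrite !adj_row_mx !mul_col_row => /eq_block_mx [ab aA2 _ A2B2].
have [a0|a0] := eqVneq a 0.
  have b0 : b = 0 by apply: gram_vec_eq0; rewrite -ab a0 mulmx0.
  have [U [uU ->]] := IH _ A2 B2 KA2 KB2 A2B2.
  by exists U; split; rewrite // mul_mx_row a0 b0 mulmx0.
have [Ua [uUa Uaa]] := Kunitary_align Ka.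
have [Ub [uUb Ubb]] := Kunitary_align Kb.
have [[KUa aUa _] [KUb aUb _]] := (uUa, uUb).
rewrite /vnorm (vnorm2_gram ab) -/(vnorm b) in Uaa.
have s0 : vnorm b != 0 by rewrite /vnorm -(vnorm2_gram ab) -/(vnorm a) vnorm_eq0.
have CD1 : usubmx (Ua *m A2) = usubmx (Ub *m B2).
  have := gram_isometry a A2 aUa; rewrite aA2 -(gram_isometry b B2 aUb) Uaa Ubb.
  rewrite !adj_axis_mul => /(congr1 (fun X => qreal (vnorm b)^-1 *: X)).
  by rewrite !scalerA -qrealM mulVf // !scale1r.
have CD2 : adj (dsubmx (Ua *m A2)) *m dsubmx (Ua *m A2) =
           adj (dsubmx (Ub *m B2)) *m dsubmx (Ub *m B2).
  have := gram_isometry A2 A2 aUa; rewrite A2B2 -(gram_isometry B2 B2 aUb).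
  rewrite -[Ua *m A2]vsubmxK -[Ub *m B2]vsubmxK !adj_col_mx !mul_row_col CD1.
  by move/addrI; rewrite !col_mxKd.
have [V [uV CDV]] :=
  IH _ _ _ (Kmx_dsub (KmxM KUa KA2)) (Kmx_dsub (KmxM KUb KB2)) CD2.
exists (adj Ua *m block_mx 1%:M 0 0 V *m Ub); split.
  by apply/KunitaryM/uUb/KunitaryM/(Kunitary_block (Kunitary1 _) uV)/Kunitary_adj.
rewrite -!mulmxA mul_mx_row Ubb -[Ub *m B2]vsubmxK mul_mx_row !mul_block_col.
rewrite !(mulmx0, mul0mx, addr0, add0r) !mul1mx -CD1 -CDV vsubmxK -Uaa -mul_mx_row.
by rewrite mulmxA aUa mul1mx.
Qed.

End Unitary.

Section OrthonormalFrames.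
Variable R : realType.
Local Notation H := (quat R).
Variable F : Kfield.

Lemma Kspan_mulmx n p q (M : 'M[H]_(n, p)) (T : 'M[H]_(p, q)) v :
  Kmx F T -> Kspan F (M *m T) v -> Kspan F M v.
Proof.
by move=> KT [c [Kc ->]]; exists (T *m c); split; [apply: KmxM | rewrite mulmxA].
Qed.

Lemma Kspan_Kunitary n p (M : 'M[H]_(n, p)) (W : 'M[H]_p) v :
  Kunitary F W -> Kspan F (M *m W) v <-> Kspan F M v.
Proof.
move=> [KW _ WW]; split; first exact: Kspan_mulmx.
by rewrite -[M in Kspan _ M]mulmx1 -WW mulmxA; apply: Kspan_mulmx; apply: Kmx_adj.
Qed.

Lemma imgsp_Kspan n p (M : 'M[H]_n) (N : 'M[H]_(n, p)) v :
  imgsp M (Kspan F N) v <-> Kspan F (M *m N) v.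
Proof.
split; first by move=> [w [[c [Kc ->]] ->]]; exists c; split => //; rewrite mulmxA.
by move=> [c [Kc ->]]; exists (N *m c); split; [exists c | rewrite mulmxA].
Qed.

Lemma gram_normalize n (w : 'cV[H]_n) : w != 0 ->
  adj (qreal (vnorm w)^-1 *: w) *m (qreal (vnorm w)^-1 *: w) = 1%:M.
Proof.
rewrite -vnorm_eq0 => w0.
rewrite adj_scale_real -scalemxAl scalemxAr_real gram_vec scalerA scale_scalar_mx.
by rewrite -!qrealM -vnorm_sqr -qreal1; congr (qreal _)%:M; field.
Qed.

Lemma orthonormal_basis n m (b : 'M[H]_(n, m)) : Kmx F b ->
  (forall c : 'cV_m, Kmx F c -> b *m c = 0 -> c = 0) ->
  exists (Y : 'M[H]_(n, m)) (T S : 'M[H]_m),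
    [/\ Kmx F Y, adj Y *m Y = 1%:M, Kmx F T, Kmx F S & Y = b *m T /\ b = Y *m S].
Proof.
elim: m b => [|m IH] b Kb Ib.
  exists b, 1%:M, 1%:M; split; rewrite ?mulmx1 //; try exact: Kmx1.
  by apply/matrixP => -[].
move: b Kb Ib; rewrite -[m.+1]/(1 + m)%N => b; rewrite -[b]hsubmxK.
move: (lsubmx b) (rsubmx b) => v b1 {b} Kb Ib.
have [Kv Kb1] : Kmx F v /\ Kmx F b1.
  by split; [have := Kmx_lsub Kb; rewrite row_mxKl | have := Kmx_rsub Kb; rewrite row_mxKr].
have bE c0 c : row_mx v b1 *m col_mx c0 c = v *m c0 + b1 *m c by rewrite mul_row_col.
have [|Y1 [T1 [S1 [KY1 uY1 KT1 KS1 [Y1E b1E]]]]] := IH b1 Kb1.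
  move=> c Kc b1c; have := Ib (col_mx 0 c) (Kmx_col_mx (@Kmx0 _ F 1 1) Kc).
  by rewrite bE mulmx0 add0r b1c => /(_ erefl)/eqP; rewrite col_mx_eq0 => /andP[_ /eqP].
pose x := adj Y1 *m v.
have Kx : Kmx F x by apply/KmxM/Kv/Kmx_adj.
pose w := v - Y1 *m x.
have Y1w : adj Y1 *m w = 0 by rewrite mulmxBr mulmxA uY1 mul1mx subrr.
have w0 : w != 0.
  apply/eqP => w0; have : col_mx (- 1%:M) (T1 *m x) = 0 :> 'cV_(1 + m).
    apply: Ib; first by apply/Kmx_col_mx/KmxM/Kx/KT1/KmxN/Kmx1.
    by rewrite bE mulmxN mulmx1 mulmxA -Y1E addrC -opprB -/w w0 oppr0.
  by move/eqP; rewrite col_mx_eq0 oppr_eq0 => /andP[/eqP/matrixP/(_ 0 0)];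
     rewrite !mxE /= mulr1n => /eqP; rewrite oner_eq0.
set nu := vnorm w; pose y := qreal nu^-1 *: w.
have Y1y : adj Y1 *m y = 0 by rewrite scalemxAr_real Y1w scaler0.
exists (row_mx y Y1).
exists (row_mx (qreal nu^-1 *: col_mx 1%:M (- (T1 *m x))) (col_mx 0 T1)).
exists (col_mx (row_mx (qreal nu)%:M 0) (row_mx x S1)); split.
- by apply/Kmx_row_mx/KY1/Kmx_scale_real/KmxB/KmxM/Kx/KY1.
- rewrite adj_row_mx mul_col_row gram_normalize // Y1y uY1.
  rewrite -[Y1 in adj y *m Y1]adjK -adjM Y1y adj0.
  by rewrite -scalar_mx_block.
- apply: Kmx_row_mx; last by apply: Kmx_col_mx => //; apply: Kmx0.
  by apply/Kmx_scale_real/Kmx_col_mx; [apply: Kmx1 | apply/KmxN/KmxM].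
- apply: Kmx_col_mx; apply: Kmx_row_mx => //; last exact: Kmx0.
  exact/Kmx_scalar/inK_real.
split; first by rewrite mul_mx_row scalemxAr_real !bE mulmx1 mulmx0 add0r mulmxN mulmxA -Y1E.
rewrite mul_row_col !mul_mx_row add_row_mx mulmx0 add0r -b1E mul_mx_scalar_real scalerA.
by rewrite -qrealM mulfV ?vnorm_eq0 // scale1r subrK.
Qed.

Lemma GrassK_orthonormal n m (eta : 'cV[H]_n -> Prop) : GrassK F n m eta ->
  exists Y : 'M[H]_(n, m),
    [/\ Kmx F Y, adj Y *m Y = 1%:M & forall v, eta v <-> Kspan F Y v].
Proof.
move=> [b [Kb Ib etab]].
have [Y [T [S [KY uY KT KS [YE bE]]]]] := orthonormal_basis Kb Ib.
exists Y; split=> // v; rewrite etab.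
by split; [rewrite bE; apply: Kspan_mulmx | rewrite YE; apply: Kspan_mulmx].
Qed.

Lemma PprojE n l (eta : 'cV[H]_n -> Prop) (Y : 'M[H]_(n, l)) :
  Kmx F Y -> adj Y *m Y = 1%:M -> (forall v, eta v <-> Kspan F Y v) ->
  Pproj F eta = Y *m adj Y.
Proof.
move=> KY uY etaY.
have projY : is_orth_proj F eta (Y *m adj Y).
  move=> v Kv; split.
    by apply/etaY; exists (adj Y *m v); split; [apply/KmxM/Kv/Kmx_adj | rewrite mulmxA].
  move=> w /etaY [c [Kc ->]].
  by rewrite adjM -mulmxA mulmxBr !mulmxA uY mul1mx subrr mulmx0.
suff uniq P : is_orth_proj F eta P -> P = Y *m adj Y.
  by apply/uniq/(epsilon_spec (inhabits 0) (is_orth_proj F eta)); exists (Y *m adj Y).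
move=> projP; apply/matrixP => i j.
have [/etaY [c [Kc Pc]] orthP] := projP (delta_mx j 0) (Kmx_delta R F j 0).
set d := adj Y *m delta_mx j 0 - c.
have Kd : Kmx F d by apply/KmxB/Kc/KmxM/Kmx_delta/Kmx_adj.
have /orthP : eta (Y *m d) by apply/etaY; exists d.
rewrite Pc adjM -mulmxA mulmxBr mulmxA uY mul1mx -/d => /gram_vec_eq0/eqP.
rewrite subr_eq0 => /eqP cE; move: Pc; rewrite -cE mulmxA.
by move=> /(congr1 (fun M : 'cV[H]_n => M i 0)); rewrite -!colE !mxE.
Qed.

Lemma Cos2_orthonormal n l k (eta : 'cV[H]_n -> Prop) (Y : 'M[H]_(n, l))
    (x : 'M[H]_(n, k)) :
  Kmx F Y -> adj Y *m Y = 1%:M -> (forall v, eta v <-> Kspan F Y v) ->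
  Cos2 F eta x = (adj x *m Y) *m adj (adj x *m Y).
Proof. by move=> KY uY etaY; rewrite /Cos2 (PprojE KY uY etaY) adjM adjK !mulmxA. Qed.

End OrthonormalFrames.

Section QuaternionEigenvector.
Variable R : realType.
Local Notation H := (quat R).

Definition qz1 (q : H) : R[i] := Complex (qre q) (qi q).
Definition qz2 (q : H) : R[i] := Complex (qj q) (qk q).

(* The complex representation [q = z1 + z2 j |-> [[z1, z2], [-z2^*, z1^*]]]. *)
Definition cplx_rep k (M : 'M[H]_k) : 'M[R[i]]_(k + k) :=
  block_mx (map_mx qz1 M) (map_mx qz2 M)
           (map_mx (fun q => - conjc (qz2 q)) M) (map_mx (fun q => conjc (qz1 q)) M).

(* Turns a left eigenvector [[w1, w2]] of [cplx_rep M] into a right *)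
(* eigenvector of [M].                                              *)
Definition quat_of_cpair (w1 w2 : R[i]) : H :=
  Quat (complex.Re w1) (- complex.Im w1) (- complex.Re w2) (- complex.Im w2).

Lemma quat_of_cpair_eq0 w1 w2 : quat_of_cpair w1 w2 = 0 -> w1 = 0 /\ w2 = 0.
Proof.
case: w1 w2 => a b [c d] [-> /eqP]; rewrite oppr_eq0 => /eqP -> /eqP.
by rewrite oppr_eq0 => /eqP -> /eqP; rewrite oppr_eq0 => /eqP ->.
Qed.

Lemma quat_of_cpair_sum I (r : seq I) (P : pred I) (f g : I -> R[i]) :
  \sum_(i <- r | P i) quat_of_cpair (f i) (g i) =
  quat_of_cpair (\sum_(i <- r | P i) f i) (\sum_(i <- r | P i) g i).
Proof.
apply: (big_rec3 (fun x y z => x = quat_of_cpair y z)).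
  by apply: quat_ext; rewrite /= ?oppr0.
by move=> i x [a b] [c d] _ ->; case: (f i) (g i) => ? ? [? ?]; apply: quat_ext => /=; ring.
Qed.

Lemma qconj_mul_cpair (h : H) w1 w2 :
  qconj h * quat_of_cpair w1 w2 =
  quat_of_cpair (w1 * qz1 h + w2 * - conjc (qz2 h)) (w1 * qz2 h + w2 * conjc (qz1 h)).
Proof. by case: h w1 w2 => ? ? ? ? [? ?] [? ?]; apply: quat_ext => /=; ring. Qed.

Lemma quat_of_cpair_scale (a : R[i]) w1 w2 :
  quat_of_cpair (a * w1) (a * w2) =
  quat_of_cpair w1 w2 * Quat (complex.Re a) (- complex.Im a) 0 0.
Proof. by case: a w1 w2 => ? ? [? ?] [? ?]; apply: quat_ext => /=; ring. Qed.

Lemma hermitian_quat_eigenvector k (M : 'M[H]_k) : (0 < k)%N -> adj M = M ->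
  exists (c : 'cV[H]_k) (x y : R), c != 0 /\ M *m c = c *m (Quat x y 0 0)%:M.
Proof.
move=> k0 aM.
have [a /eigenvalueP [v vE v0]] := @eigenvalue_closed _ _ (cplx_rep M) (ltn_addl k k0).
move: vE v0; rewrite -[v]hsubmxK; move: (lsubmx v) (rsubmx v) => v1 v2 {v}.
rewrite /cplx_rep mul_row_block scale_row_mx => /eq_row_mx [E1 E2] v0.
exists (\col_j quat_of_cpair (v1 0 j) (v2 0 j)), (complex.Re a), (- complex.Im a).
split.
  apply: contra v0 => /eqP/matrixP c0; rewrite -row_mx0; apply/eqP.
  by congr row_mx; apply/matrixP => i j; have := c0 j 0;
     rewrite !mxE ord1 => /quat_of_cpair_eq0 [].
apply/matrixP => i z; rewrite ord1 {z} !mxE big_ord1 !mxE /= mulr1n.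
rewrite -quat_of_cpair_scale.
move/matrixP/(_ 0 i): E1; move/matrixP/(_ 0 i): E2; rewrite !mxE -!big_split /= => <- <-.
rewrite -quat_of_cpair_sum; apply: eq_bigr => j _.
by rewrite !mxE -{1}aM adjE qconj_mul_cpair.
Qed.

End QuaternionEigenvector.

Section PsdSqrt.
Variable R : realType.
Local Notation H := (quat R).
Variable F : Kfield.

(* [H = \sum_l K * Kbasis l], and [Kproj] is the left [K]-linear *)
(* coordinate on [Kbasis 0 = 1].                                 *)
Definition Kproj (q : H) : H :=
  match F with
  | Kreal => qreal (qre q)
  | Kcomplex => Quat (qre q) (qi q) 0 0
  | Kquat => q
  end.

Definition Kbasis (l : nat) : H :=
  match F, l with
  | Kreal, 0 => 1
  | Kreal, 1 => Quat 0 1 0 0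
  | Kreal, 2 => Quat 0 0 1 0
  | Kreal, 3 => Quat 0 0 0 1
  | Kcomplex, 0 => 1
  | Kcomplex, 1 => Quat 0 0 1 0
  | Kquat, 0 => 1
  | _, _ => 0
  end.

Lemma inK_Kproj q : inK F (Kproj q).
Proof. by rewrite /Kproj; case: F => //=; rewrite !eqxx. Qed.
Lemma Kproj_sum I (r : seq I) (P : pred I) (f : I -> H) :
  Kproj (\sum_(i <- r | P i) f i) = \sum_(i <- r | P i) Kproj (f i).
Proof.
apply: big_morph => [p q|]; last by rewrite /Kproj; case: F.
by rewrite /Kproj; case: F => //; apply: quat_ext => /=; rewrite ?addr0.
Qed.
Lemma KprojMl h q : inK F h -> Kproj (h * q) = h * Kproj q.
Proof.
rewrite /Kproj; case: F => //=; case: h => a b c d /=.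
  by move=> /and3P[/eqP-> /eqP-> /eqP->]; apply: quat_ext => /=; ring.
by move=> /andP[/eqP-> /eqP->]; apply: quat_ext => /=; ring.
Qed.
Lemma Kproj_decomp q : q = \sum_(l < 4) Kproj (q * qconj (Kbasis l)) * Kbasis l.
Proof.
rewrite !big_ord_recr big_ord0 /= /Kproj /Kbasis.
by case: F; case: q => a b c d; apply: quat_ext => /=; ring.
Qed.

(* A [K]-eigenvector is extracted from a quaternionic one through the *)
(* [K]-linear coordinates [Kproj (_ * qconj (Kbasis l))].             *)
Lemma hermitian_Keigenvector k (M : 'M[H]_k) : (0 < k)%N -> Kmx F M -> adj M = M ->
  exists (c : 'cV[H]_k) (d : R), [/\ Kmx F c, c != 0 & M *m c = qreal d *: c].
Proof.
move=> k0 KM aM.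
have [c [x [y [c0 Mc]]]] := hermitian_quat_eigenvector k0 aM.
have y0 : y = 0.
  have n0 : vnorm2 c != 0 by apply: contra c0 => /eqP /vnorm2_eq0 ->.
  have : adj (adj c *m M *m c) = adj c *m M *m c by rewrite !adjM adjK aM mulmxA.
  rewrite -mulmxA Mc mulmxA gram_vec -scalar_mxM adj_scalar.
  move=> /matrixP /(_ 0 0); rewrite !mxE /= mulr1n => /(congr1 (@qi R)) /= h.
  have : vnorm2 c * y = 0 by lra.
  by move/eqP; rewrite mulf_eq0 (negPf n0) => /eqP.
have {}Mc : M *m c = qreal x *: c by rewrite Mc y0 mul_mx_scalar_real.
pose cl (l : 'I_4) : 'cV[H]_k := map_mx (fun q => Kproj (q * qconj (Kbasis l))) c.
have [l cl0|cl0] := pickP (fun l : 'I_4 => cl l != 0).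
  exists (cl l), x; split => //; first by move=> i j; rewrite mxE; apply: inK_Kproj.
  apply/matrixP => i j; rewrite !mxE.
  transitivity (Kproj ((M *m c) i j * qconj (Kbasis l))).
    rewrite !mxE mulr_suml Kproj_sum; apply: eq_bigr => m _.
    by rewrite mxE -mulrA (KprojMl _ (KM i m)).
  by rewrite Mc !mxE -mulrA KprojMl //; apply: inK_real.
case/negP: c0; apply/eqP/matrixP => i j; rewrite mxE [c i j]Kproj_decomp.
apply: big1 => l _; have /negbFE/eqP/matrixP/(_ i j) := cl0 l.
by rewrite !mxE => ->; rewrite mul0r.
Qed.

Lemma psdK_congr m n (U : 'M[H]_(m, n)) (M : 'M[H]_m) :
  Kmx F U -> psdK F M -> psdK F (adj U *m M *m U).
Proof.
move=> KU [KM aM pM]; split.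
- by apply/KmxM/KU/KmxM/KM/Kmx_adj.
- by rewrite !adjM adjK aM mulmxA.
by move=> c Kc; have := pM (U *m c) (KmxM KU Kc); rewrite adjM !mulmxA.
Qed.

Lemma quad_block_diag m n (A : 'M[H]_m) (D : 'M[H]_n) (c1 : 'cV[H]_m) (c2 : 'cV[H]_n) :
  adj (col_mx c1 c2) *m block_mx A 0 0 D *m col_mx c1 c2 =
  adj c1 *m A *m c1 + adj c2 *m D *m c2.
Proof.
by rewrite adj_col_mx mul_row_block !(mulmx0, mul0mx, addr0, add0r) mul_row_col.
Qed.

Lemma psdK_block_diag m n (A : 'M[H]_m) (D : 'M[H]_n) :
  psdK F A -> psdK F D -> psdK F (block_mx A 0 0 D).
Proof.
move=> [KA aA pA] [KD aD pD]; split.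
- by apply: Kmx_block_mx => //; apply: Kmx0.
- by rewrite adj_block_mx aA aD !adj0.
move=> c Kc; rewrite -[c]vsubmxK quad_block_diag mxE.
by apply: addr_ge0; [apply/pA/Kmx_usub | apply/pD/Kmx_dsub].
Qed.

Lemma psdK_block_diag_r m n (A : 'M[H]_m) (D : 'M[H]_n) :
  psdK F (block_mx A 0 0 D) -> psdK F D.
Proof.
move=> [KM aM pM]; split.
- by move=> i j; have := KM (rshift m i) (rshift m j); rewrite block_mxEdr.
- by move: aM; rewrite adj_block_mx => /eq_block_mx [].
move=> c Kc; have := pM (col_mx 0 c) (Kmx_col_mx (@Kmx0 _ F _ _) Kc).
by rewrite quad_block_diag adj0 !mul0mx add0r.
Qed.

Lemma psdK_scalar n d : 0 <= d -> psdK F ((qreal d)%:M : 'M[H]_n).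
Proof.
move=> d0; split; first exact/Kmx_scalar/inK_real.
  by rewrite adj_scalar qconj_real.
move=> c _; rewrite mul_mx_scalar_real -scalemxAl gram_vec mxE mxE eqxx mulr1n.
by rewrite qre_qrealM mulr_ge0 ?vnorm2_ge0.
Qed.

(* One step of the spectral theorem: split off a [K]-eigenvector. *)
Lemma psdK_deflate m (M : 'M[H]_(1 + m)) : psdK F M ->
  exists U d (M2 : 'M[H]_m), [/\ Kunitary F U, 0 <= d, psdK F M2 &
    U *m M *m adj U = block_mx (qreal d)%:M 0 0 M2].
Proof.
move=> psdM; have [KM aM pM] := psdM.
have [c [d [Kc c0 Mc]]] := hermitian_Keigenvector (ltn0Sn m) KM aM.
have d0 : 0 <= d.
  have := pM c Kc; rewrite -mulmxA Mc scalemxAr_real gram_vec.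
  rewrite mxE mxE eqxx mulr1n qre_qrealM /= pmulr_lge0 // lt_def vnorm2_ge0 andbT.
  by apply: contra c0 => /eqP /vnorm2_eq0 ->.
have [U [uU Uc]] := Kunitary_align Kc.
have [KU aU _] := uU.
have s0 : vnorm c != 0 by rewrite vnorm_eq0.
pose e1 : 'cV[H]_(1 + m) := col_mx 1%:M 0.
have {}Uc : U *m c = qreal (vnorm c) *: e1 by rewrite Uc scale_col_mx scaler0 scalemx1.
have Ue1 : adj U *m e1 = qreal (vnorm c)^-1 *: c.
  rewrite -[c in _ *: c]mul1mx -aU -mulmxA Uc scalemxAr_real scalerA -qrealM.
  by rewrite mulVf // scale1r.
set M' := U *m M *m adj U.
have M'e1 : M' *m e1 = qreal d *: e1.
  rewrite -mulmxA Ue1 scalemxAr_real -mulmxA Mc scalemxAr_real Uc !scalerA -!qrealM.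
  by congr (qreal _ *: _); field.
have aM' : adj M' = M' by rewrite /M' !adjM adjK aM mulmxA.
have psdM' : psdK F M' by have := psdK_congr (Kmx_adj KU) psdM; rewrite adjK.
have M'E : M' = block_mx (qreal d)%:M 0 0 (drsubmx M').
  have [ulE dlE] : ulsubmx M' = (qreal d)%:M /\ dlsubmx M' = 0.
    move: M'e1; rewrite -[M' in M' *m _]submxK /e1 mul_block_col !mulmx0 !addr0 !mulmx1.
    by rewrite scale_col_mx scaler0 scalemx1 => /eq_col_mx.
  have urE : ursubmx M' = 0.
    have := congr1 ursubmx aM'; rewrite -[M' in adj M']submxK adj_block_mx block_mxKur.
    by move=> <-; rewrite dlE adj0.
  by rewrite -[M' in LHS]submxK ulE dlE urE.
exists U, d, (drsubmx M'); split => //.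
by move: psdM'; rewrite {1}M'E => /psdK_block_diag_r.
Qed.

Lemma psdK_sqrt_exists k (M : 'M[H]_k) : psdK F M -> exists S, psdK F S /\ S *m S = M.
Proof.
elim: k M => [|m IH] M psdM.
  by exists M; split => //; apply/matrixP => -[].
move: M psdM; rewrite -[m.+1]/(1 + m)%N => M psdM.
have [U [d [M2 [[KU aU bU] d0 psdM2 UME]]]] := psdK_deflate psdM.
have [S2 [psdS2 S2E]] := IH M2 psdM2.
pose D : 'M[H]_(1 + m) := block_mx (qreal (Num.sqrt d))%:M 0 0 S2.
exists (adj U *m D *m U); split.
  by apply: psdK_congr => //; apply: psdK_block_diag => //; apply/psdK_scalar/sqrtr_ge0.
have DD : D *m D = block_mx (qreal d)%:M 0 0 M2.
  rewrite mulmx_block !(mulmx0, mul0mx, addr0, add0r) S2E -scalar_mxM -qrealM.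
  by rewrite -expr2 sqr_sqrtr.
have -> : adj U *m D *m U *m (adj U *m D *m U) = adj U *m (D *m D) *m U.
  by rewrite !mulmxA -(mulmxA _ U) bU mulmx1.
by rewrite DD -UME !mulmxA aU mul1mx -mulmxA aU mulmx1.
Qed.

Lemma psd_sqrtP k (M : 'M[H]_k) : psdK F M ->
  psdK F (psd_sqrt F M) /\ psd_sqrt F M *m psd_sqrt F M = M.
Proof. by move=> /psdK_sqrt_exists; apply: epsilon_spec. Qed.

End PsdSqrt.

Section BlockEntries.
Variable R : realType.
Local Notation H := (quat R).

Lemma mxget_inE m n (M : 'M[H]_(m, n)) i j (hi : (i < m)%N) (hj : (j < n)%N) :
  mxget M i j = M (Ordinal hi) (Ordinal hj).
Proof.
rewrite /mxget (@insubT nat (fun k => (k < m)%N) _ i hi).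
by rewrite (@insubT nat (fun k => (k < n)%N) _ j hj).
Qed.

Lemma mxgetE m n (M : 'M[H]_(m, n)) (i : 'I_m) (j : 'I_n) : mxget M i j = M i j.
Proof. by rewrite (mxget_inE _ (ltn_ord i) (ltn_ord j)); congr (M _ _); apply: val_inj. Qed.

Lemma mxget_outi m n (M : 'M[H]_(m, n)) i j : (m <= i)%N -> mxget M i j = 0.
Proof. by move=> hi; rewrite /mxget insubF //; apply/negbTE; rewrite -leqNgt. Qed.

Lemma mxget_outj m n (M : 'M[H]_(m, n)) i j : (n <= j)%N -> mxget M i j = 0.
Proof.
move=> hj; rewrite /mxget; case: (insub i) => // i'.
by rewrite insubF //; apply/negbTE; rewrite -leqNgt.
Qed.

Lemma mxget_col m1 m2 n (A : 'M[H]_(m1, n)) (B : 'M[H]_(m2, n)) i j :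
  mxget (col_mx A B) i j = if (i < m1)%N then mxget A i j else mxget B (i - m1) j.
Proof.
have [hj|hj] := ltnP j n; last first.
  by rewrite !mxget_outj //; case: ifP.
have [hi|hi] := ltnP i (m1 + m2); last first.
  rewrite mxget_outi //; case: ifP => h; first lia.
  by rewrite mxget_outi //; lia.
rewrite (mxget_inE _ hi hj) mxE.
case: splitP => [i' /= ei|i' /= ei].
  have hi1 : (i < m1)%N by have := ltn_ord i'; lia.
  rewrite hi1 (mxget_inE _ hi1 hj); congr (A _ _); exact: val_inj.
have hi1 : (i < m1)%N = false by apply/negbTE; lia.
have hi2 : (i - m1 < m2)%N by have := ltn_ord i'; lia.
rewrite hi1 (mxget_inE _ hi2 hj); congr (B _ _); apply: val_inj => /=; lia.
Qed.

Lemma mxget_row m n1 n2 (A : 'M[H]_(m, n1)) (B : 'M[H]_(m, n2)) i j :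
  mxget (row_mx A B) i j = if (j < n1)%N then mxget A i j else mxget B i (j - n1).
Proof.
have [hi|hi] := ltnP i m; last first.
  by rewrite !mxget_outi //; case: ifP.
have [hj|hj] := ltnP j (n1 + n2); last first.
  rewrite mxget_outj //; case: ifP => h; first lia.
  by rewrite mxget_outj //; lia.
rewrite (mxget_inE _ hi hj) mxE.
case: splitP => [j' /= ej|j' /= ej].
  have hj1 : (j < n1)%N by have := ltn_ord j'; lia.
  rewrite hj1 (mxget_inE _ hi hj1); congr (A _ _); exact: val_inj.
have hj1 : (j < n1)%N = false by apply/negbTE; lia.
have hj2 : (j - n1 < n2)%N by have := ltn_ord j'; lia.
rewrite hj1 (mxget_inE _ hi hj2); congr (B _ _); apply: val_inj => /=; lia.
Qed.

Lemma mxget_block m1 m2 n1 n2 (A : 'M[H]_(m1, n1)) (B : 'M[H]_(m1, n2))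
  (C : 'M[H]_(m2, n1)) (D : 'M[H]_(m2, n2)) i j :
  mxget (block_mx A B C D) i j =
  if (i < m1)%N then (if (j < n1)%N then mxget A i j else mxget B i (j - n1))
  else (if (j < n1)%N then mxget C (i - m1) j else mxget D (i - m1) (j - n1)).
Proof. by rewrite /block_mx mxget_col !mxget_row. Qed.

Lemma mxget0 m n i j : mxget (0 : 'M[H]_(m, n)) i j = 0.
Proof. by rewrite /mxget; case: insub => // i'; case: insub => // j'; rewrite mxE. Qed.

Lemma mxget1 m i j : mxget (1%:M : 'M[H]_m) i j =
  if (i < m)%N then (if (j < m)%N then (if i == j then 1 else 0) else 0) else 0.
Proof.
have [hi|hi] := ltnP i m; last by rewrite mxget_outi.
have [hj|hj] := ltnP j m; last by rewrite mxget_outj.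
rewrite (mxget_inE _ hi hj) mxE /=.
by rewrite -val_eqE /=; case: (i == j).
Qed.

Lemma eq_mx_mxget m n (M : 'M[H]_(m, n)) (N : 'M[H]_(m, n)) :
  (forall i j, (i < m)%N -> (j < n)%N -> mxget M i j = mxget N i j) -> M = N.
Proof.
move=> h; apply/matrixP => i j; rewrite -!mxgetE; apply: h; apply: ltn_ord.
Qed.

Ltac mxget_case := match goal with
 | |- context [if (?a < ?b)%N then _ else _] => case: (ltnP a b) => ?; try (exfalso; lia)
 | |- context [if (?a == ?b :> nat) then _ else _] => case: (@eqP nat a b) => ?; try (exfalso; lia)
 end.
Ltac mxget_cases := repeat mxget_case; try reflexivity; try (congr (mxget _ _ _); lia).

Lemma mxget_matrix m n m' n' (X : 'M[H]_(m', n')) i j : (i < m)%N -> (j < n)%N ->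
  mxget (\matrix_(i < m, j < n) mxget X i j) i j = mxget X i j.
Proof. by move=> hi hj; rewrite (mxget_inE _ hi hj) mxE. Qed.

Lemma mxget_castmx m n m' n' (e : (m = m') * (n = n')) (A : 'M[H]_(m, n)) i j :
  mxget (castmx e A) i j = mxget A i j.
Proof. by case: e => e1 e2; case: m' / e1; case: n' / e2; rewrite castmx_id. Qed.

Lemma xhat0E m k : xhat0 R (m + k) k = col_mx (0 : 'M[H]_(m, k)) 1%:M.
Proof.
apply: eq_mx_mxget => i j hi hj; rewrite /xhat0 mxget_matrix //.
rewrite !mxget_col !mxget0 !mxget1; mxget_cases.
Qed.

Lemma y0E p q k : y0 R (p + k + q + k) (p + k) =
  col_mx (col_mx 1%:M (0 : 'M[H]_(q, p + k))) (0 : 'M[H]_(k, p + k)).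
Proof.
apply: eq_mx_mxget => i j hi hj; rewrite /y0 mxget_matrix //.
rewrite !mxget_col !mxget0 !mxget1; mxget_cases.
Qed.

Lemma block_diag_castE m k (al : 'M[H]_(m + k - k)) (de : 'M[H]_k) :
  \matrix_(i < m + k, j < m + k) mxget (block_mx al 0 0 de) i j =
  block_mx (castmx (addnK k m, addnK k m) al) 0 0 de.
Proof.
apply: eq_mx_mxget => i j hi hj; rewrite mxget_matrix //.
rewrite !mxget_block !mxget0 mxget_castmx; mxget_cases.
Qed.

Lemma jmatE F p q k (a : 'M[H]_k) :
  jmat F (p + k + q + k) k (p + k) a =
  block_mx (block_mx (block_mx 1%:M 0 0 (psd_sqrt F (1%:M - adj a *m a)) : 'M_(p + k))
                     0 0 (1%:M : 'M_q))
           (col_mx (col_mx (0 : 'M_(p, k)) (adj a)) (0 : 'M_(q, k)))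
           (row_mx (row_mx (0 : 'M_(k, p)) (- a)) (0 : 'M_(k, q)))
           (psd_sqrt F (1%:M - a *m adj a)).
Proof.
apply: eq_mx_mxget => i j hi hj; rewrite /jmat mxget_matrix //.
rewrite !mxget_block !mxget_col !mxget_row !mxget0 !mxget1; mxget_cases.
Qed.



Variable F : Kfield.

Lemma unitaryK_Kunitary n (g : 'M[H]_n) : unitaryK F g -> Kunitary F g.
Proof.
move=> [Kg ag]; have [|U [uU ->]] := @gram_eq_Kunitary _ F _ _ g 1%:M Kg (@Kmx1 R F n).
  by rewrite adj1 mulmx1.
by rewrite mulmx1.
Qed.

Lemma inKgrpP m k (rho : 'M[H]_(m + k)) :
  inKgrp F (m + k) k rho <->
  exists al de, [/\ Kunitary F al, Kunitary F de & rho = block_mx al 0 0 de].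
Proof.
have castK a b (e : a = b) (al : 'M[H]_a) :
    unitaryK F (castmx (e, e) al) <-> unitaryK F al.
  by case: b / e; rewrite castmx_id.
split=> [[al [de [ual ude ->]]]|[al [de [[Kal aal _] [Kde ade _] ->]]]].
  exists (castmx (addnK k m, addnK k m) al), de; rewrite block_diag_castE.
  by split=> //; apply: unitaryK_Kunitary; rewrite ?castK.
exists (castmx (esym (addnK k m), esym (addnK k m)) al), de.
by rewrite block_diag_castE castmxKV; split=> //; rewrite castK.
Qed.

End BlockEntries.

Section NormalForm.
Variable R : realType.
Local Notation H := (quat R).
Variable F : Kfield.

Lemma adj_e2_mul m k p (X : 'M[H]_(m + k, p)) :
  adj (col_mx (0 : 'M[H]_(m, k)) 1%:M) *m X = dsubmx X.
Proof. by rewrite -{1}[X]vsubmxK adj_col_mx mul_row_col adj0 mul0mx add0r adj1 mul1mx. Qed.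

(* Witt's theorem twice: first for the lower blocks, then for the upper ones. *)
Lemma orthonormal_normal_form m k l (Z : 'M[H]_(m + k, l)) (Q : 'M[H]_(m, l))
    (B : 'M[H]_(k, l)) :
  Kmx F Z -> Kmx F Q -> Kmx F B -> adj Z *m Z = 1%:M ->
  adj Q *m Q + adj B *m B = 1%:M -> dsubmx Z *m adj (dsubmx Z) = B *m adj B ->
  exists W al, [/\ Kunitary F W, Kunitary F al & Z *m W = col_mx (al *m Q) B].
Proof.
move=> KZ KQ KB uZ QB ZB.
have [W [uW ZW]] : exists W, Kunitary F W /\ adj (dsubmx Z) = W *m adj B.
  by apply: gram_eq_Kunitary; rewrite ?adjK //; apply/Kmx_adj => //; apply: Kmx_dsub.
have [KW aW _] := uW.
have dZW : dsubmx Z *m W = B by rewrite -[dsubmx Z]adjK ZW adjM adjK -mulmxA aW mulmx1.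
have [al [ual uZW]] : exists al, Kunitary F al /\ usubmx Z *m W = al *m Q.
  apply: gram_eq_Kunitary => //; first exact/KmxM/KW/Kmx_usub.
  have h : adj (usubmx Z *m W) *m (usubmx Z *m W) + adj B *m B = 1%:M.
    rewrite -dZW -mul_row_col -adj_col_mx -mul_col_mx vsubmxK.
    by rewrite adjM -mulmxA (mulmxA (adj Z)) uZ mul1mx aW.
  by apply: (addIr (adj B *m B)); rewrite h QB.
by exists W, al; split=> //; rewrite -[Z]vsubmxK mul_col_mx uZW dZW.
Qed.

End NormalForm.

(* The columns of [j(r^{1/2}) y_0], split after the first [n - k] rows. *)
Definition frame_top (R : realType) (F : Kfield) (p q k : nat) (r : 'M[quat R]_k)
    : 'M[quat R]_(p + k + q, p + k) :=
  col_mx (block_mx 1%:M 0 0 (psd_sqrt F (1%:M - r))) 0.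
Definition frame_bot (R : realType) (F : Kfield) (p k : nat) (r : 'M[quat R]_k)
    : 'M[quat R]_(k, p + k) :=
  row_mx 0 (- psd_sqrt F r).

Section CanonicalFrame.
Variables (R : realType) (F : Kfield) (p q k : nat) (r : 'M[quat R]_k).
Hypotheses (hr0 : psdK F r) (hr1 : psdK F (1%:M - r)).
Local Notation H := (quat R).
Local Notation n := (p + k + q + k)%N.
Local Notation Q := (frame_top F p q r).
Local Notation B := (frame_bot F p r).

Lemma jmat_y0E :
  jmat F n k (p + k) (psd_sqrt F r) *m y0 R n (p + k) = col_mx Q B.
Proof.
have [[_ aa _] aaE] := psd_sqrtP hr0.
rewrite jmatE y0E aa aaE !mul_block_col !(mulmx0, addr0, mul0mx, add0r, mulmx1).
by rewrite mul_row_col !(mulmx0, addr0, mulmx1).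
Qed.

Lemma Kmx_frame_top : Kmx F Q.
Proof.
have [[KS _ _] _] := psd_sqrtP hr1.
apply: Kmx_col_mx; last exact: Kmx0.
by apply: Kmx_block_mx => //; [apply: Kmx1 | apply: Kmx0 | apply: Kmx0].
Qed.

Lemma Kmx_frame_bot : Kmx F B.
Proof.
have [[Ka _ _] _] := psd_sqrtP hr0.
by apply: Kmx_row_mx; [apply: Kmx0 | apply: KmxN].
Qed.

Lemma frame_bot_gram : B *m adj B = r.
Proof.
have [[_ aa _] aaE] := psd_sqrtP hr0.
by rewrite adj_row_mx mul_row_col mul0mx add0r adjN aa mulNmx mulmxN opprK aaE.
Qed.

Lemma frame_gram : adj Q *m Q + adj B *m B = 1%:M.
Proof.
have [[_ aa _] aaE] := psd_sqrtP hr0.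
have [[_ aS _] SSE] := psd_sqrtP hr1.
rewrite adj_col_mx mul_row_col adj0 mul0mx addr0 adj_block_mx !adj0 adj1 aS.
rewrite mulmx_block !(mulmx0, mul0mx, addr0, add0r, mulmx1) SSE.
rewrite adj_row_mx mul_col_row adj0 !mul0mx !mulmx0 adjN aa mulNmx mulmxN opprK aaE.
by rewrite add_block_mx !(addr0, add0r) subrK -scalar_mx_block.
Qed.

Lemma Cos2_canonical_frame (g : 'M[H]_n) al de (eta : 'cV[H]_n -> Prop) :
  Kunitary F g -> Kunitary F al -> Kunitary F de ->
  (forall v, eta v <-> Kspan F (g *m block_mx al 0 0 de *m col_mx Q B) v) ->
  Cos2 F eta (g *m col_mx 0 1%:M) = de *m r *m adj de.
Proof.
move=> [Kg ag _] ual ude etaE.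
have [Krho arho _] := Kunitary_block ual ude.
have KY : Kmx F (g *m block_mx al 0 0 de *m col_mx Q B).
  by apply/KmxM/(Kmx_col_mx Kmx_frame_top Kmx_frame_bot)/KmxM.
have uY : adj (g *m block_mx al 0 0 de *m col_mx Q B) *m
          (g *m block_mx al 0 0 de *m col_mx Q B) = 1%:M.
  rewrite -mulmxA (gram_isometry _ _ ag) (gram_isometry _ _ arho).
  by rewrite adj_col_mx mul_row_col frame_gram.
have xY : adj (g *m col_mx 0 1%:M) *m (g *m block_mx al 0 0 de *m col_mx Q B) = de *m B.
  rewrite -mulmxA (gram_isometry _ _ ag) adj_e2_mul mul_block_col.
  by rewrite !(mul0mx, add0r) col_mxKd.
by rewrite (Cos2_orthonormal _ KY uY etaE) xY adjM mulmxA -(mulmxA de) frame_bot_gram.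
Qed.

Lemma canonical_frame_of_Cos2 (g : 'M[H]_n) de (eta : 'cV[H]_n -> Prop) :
  Kunitary F g -> Kunitary F de -> GrassK F n (p + k) eta ->
  Cos2 F eta (g *m col_mx 0 1%:M) = de *m r *m adj de ->
  exists al, Kunitary F al /\
    forall v, eta v <-> Kspan F (g *m block_mx al 0 0 de *m col_mx Q B) v.
Proof.
move=> [Kg _ bg] ude heta Cde.
have [Kde ade _] := ude.
have [Y [KY uY etaY]] := GrassK_orthonormal heta.
have KZ : Kmx F (adj g *m Y) by apply/KmxM/KY/Kmx_adj.
have uZ : adj (adj g *m Y) *m (adj g *m Y) = 1%:M.
  by rewrite adjM adjK -mulmxA (mulmxA g) bg mul1mx uY.
have xY : adj (g *m col_mx 0 1%:M) *m Y = dsubmx (adj g *m Y).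
  by rewrite adjM -mulmxA adj_e2_mul.
have Z2 : dsubmx (adj g *m Y) *m adj (dsubmx (adj g *m Y)) = (de *m B) *m adj (de *m B).
  rewrite -xY -(Cos2_orthonormal _ KY uY etaY) Cde adjM mulmxA -(mulmxA de B).
  by rewrite frame_bot_gram.
have QB : adj Q *m Q + adj (de *m B) *m (de *m B) = 1%:M.
  by rewrite (gram_isometry _ _ ade) frame_gram.
have [W [al [uW ual ZW]]] :=
  orthonormal_normal_form KZ Kmx_frame_top (KmxM Kde Kmx_frame_bot) uZ QB Z2.
have YW : Y *m W = g *m block_mx al 0 0 de *m col_mx Q B.
  rewrite -mulmxA mul_block_col !(mul0mx, addr0, add0r) -ZW !mulmxA bg mul1mx.
  by [].
by exists al; split=> // v; rewrite etaY -(Kspan_Kunitary Y v uW) YW.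
Qed.

End CanonicalFrame.

Theorem lemma4p2 (R : realType) (F : Kfield) (n k k' : nat)
    (hk1 : (1 <= k)%N) (hkk' : (k <= k')%N) (hk'n : (k' < n)%N) (hsum : (k + k' <= n)%N)
    (r : 'M[quat R]_k) (hr0 : psdK F r) (hr1 : psdK F (1%:M - r))
    (eta : 'cV[quat R]_n -> Prop) (heta : GrassK F n k' eta)
    (x : 'M[quat R]_(n, k)) (hx : StiefelK F x)
    (gx : 'M[quat R]_n) (hgx : unitaryK F gx) (hxg : x = gx *m xhat0 R n k) :
  (exists delta0 : 'M[quat R]_k,
      unitaryK F delta0 /\ Cos2 F eta x = delta0 *m r *m adj delta0)
  <->
  (exists rho : 'M[quat R]_n,
      inKgrp F n k rho /\
      forall v, eta v <-> imgsp (gx *m rho *m jmat F n k k' (psd_sqrt F r)) (eta0 F n k') v).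
Proof.
have [p ek'] : exists p, k' = (p + k)%N by exists (k' - k)%N; lia.
have [q en] : exists q, n = (p + k + q + k)%N by exists (n - (p + k) - k)%N; lia.
subst k' n.
have ugx := unitaryK_Kunitary hgx.
have frameE rho v : imgsp (gx *m rho *m jmat F _ k (p + k) (psd_sqrt F r)) (eta0 F _ (p + k)) v
    <-> Kspan F (gx *m rho *m col_mx (frame_top F p q r) (frame_bot F p r)) v.
  by rewrite /eta0 imgsp_Kspan -mulmxA (jmat_y0E p q hr0).
rewrite hxg xhat0E; split.
- move=> [de [/unitaryK_Kunitary ude Cde]].
  have [al [ual etaE]] := canonical_frame_of_Cos2 hr0 hr1 ugx ude heta Cde.
  exists (block_mx al 0 0 de); split; first by apply/inKgrpP; exists al, de.
  by move=> v; rewrite frameE etaE.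
- move=> [_ [/inKgrpP [al [de [ual ude ->]]] etaE]].
  have [Kde ade _] := ude.
  exists de; split; first by split.
  by apply: (Cos2_canonical_frame hr0 hr1 ugx ual ude) => v; rewrite etaE frameE.
Qed.
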